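(* Fix $T>0$, $\lambda>0$ and a continuous non-increasing pricing schedule $p:[0,T]\to[0,\infty)$. Let $w:[0,1]\to[0,T]\cup\{\infty\}$ be a regular threshold time function, and suppose all competing buyers use the value-based threshold strategy $\sigma_w(v,\alpha)=\max\{w(v),\alpha\}$. Then for every buyer type $(v,\alpha)\in[0,1]\times[0,T]$ and every $\tau\in[\alpha,T]$, $$\Pi^b(\tau;v,\alpha,\sigma_w,p)=\Pi^b(\tau;v,0,\sigma_w,p)=(v-p(\tau))\,e^{-\lambda\tau(1-w^{-1}(\tau))},$$ where $w^{-1}(t):=\inf\{u\in[0,1]: w(u)\le t\}$ (with $\inf\emptyset=1$).
   Context: Market model: a single item is sold over $[0,T]$. For a buyer of valuation $v\in[0,1]$ and arrival time $\alpha\in[0,T]$ choosing a target purchase time $\tau\in[\alpha,T]$, when the other buyers use a strategy $\sigma:[0,1]\times[0,T]\to[0,T]\cup\{\infty\}$ (with $\sigma(u,a)\ge a$), the interim utility is $$\Pi^b(\tau;v,\alpha,\sigma,p)=\mathbb{E}\Big[(v-p(\tau))\,\mathbb{I}\Big\{\tau<\min_{i\in\{1,\dots,N_-\}}\sigma(v_i,\alpha_i)\Big\}\Big],$$ where the number of competing buyers $N_-$ is Poisson with mean $\lambda T$, and conditional on $N_-$ the competitors' valuations $v_i$ are i.i.d. uniform on $[0,1]$ and their arrival times $\alpha_i$ are i.i.d. uniform on $[0,T]$, all independent (the minimum over an empty set is $\infty$). A threshold time function is a map $w:[0,1]\to[0,T]\cup\{\infty\}$; with $\underline v_w=\inf\{v: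 w(v)<\infty\}$ and $\overline v_w=\sup\{v: w(v)>0\}$, $w$ is regular if: (i) non-increasing on $[0,1]$; (ii) strictly decreasing on $[\underline v_w,\overline v_w]\cap[0,1]$; (iii) continuous on $(\underline v_w,\overline v_w]\cap[0,1]$; (iv) right-differentiable on $[\underline v_w,\overline v_w)\cap[0,1]$. *)

From mathcomp Require Import all_boot all_order all_algebra.
From mathcomp Require Import all_classical all_reals all_analysis.
Set Implicit Arguments. Unset Strict Implicit. Unset Printing Implicit Defensive.
Import Order.TTheory GRing.Theory Num.Theory.
Import numFieldNormedType.Exports.
Local Open Scope classical_set_scope.
Local Open Scope ring_scope.

Section Market.
Variable R : realType.

(* A strategy maps (valuation, arrival time) to a target time in [0,T] \cup {oo};
   oo is represented by +oo in \bar R. *)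

(* Expectation of F (s) where s is a list of n i.i.d. competitor types (v_i, a_i),
   v_i uniform on [0,1], a_i uniform on [0,T] (independent), written as the
   iterated integral (density 1 on [0,1], 1/T on [0,T]). *)
Fixpoint iid_expect (T : R) (n : nat) (F : seq (R * R) -> R) : R :=
  match n with
  | 0 => F [::]
  | n'.+1 =>
      Rintegral (@lebesgue_measure R) `[0, 1]%classic (fun u =>
        T^-1 * Rintegral (@lebesgue_measure R) `[0, T]%classic (fun a =>
          iid_expect T n' (fun s => F ((u, a) :: s))))
  end.

Definition min_sigma (sigma : R -> R -> \bar R) (s : seq (R * R)) : \bar R :=
  \big[Order.min/+oo%E]_(x <- s) sigma x.1 x.2.

(* Interim utility Pi^b(tau; v, alpha, sigma, p): N_- ~ Poisson(lam * T). *)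
Definition interim_utility (T lam : R) (sigma : R -> R -> \bar R) (p : R -> R)
    (tau v alpha : R) : R :=
  let u : nat -> R := (fun n : nat =>
        expR (- (lam * T)) * (lam * T) ^+ n / (n`!)%:R *
        iid_expect T n (fun s =>
          (v - p tau) * (if (tau%:E < min_sigma sigma s)%E then 1 else 0))) in
  limn (series u).

Definition sigma_thr (w : R -> \bar R) : R -> R -> \bar R :=
  fun u a => Order.max (w u) a%:E.

Definition vlow (w : R -> \bar R) : \bar R :=
  ereal_inf [set x%:E | x in [set v | 0 <= v <= 1 /\ (w v < +oo)%E]].
Definition vhigh (w : R -> \bar R) : \bar R :=
  ereal_sup [set x%:E | x in [set v | 0 <= v <= 1 /\ (0 < w v)%E]].

Definition right_differentiable_at (f : R -> \bar R) (x : R) : Prop :=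
  f x \is a fin_num /\
  exists d : R, (fun h : R => (fine (f (x + h)) - fine (f x)) / h) @ 0^'+ --> d.

Definition regular (w : R -> \bar R) : Prop :=
  [/\ (forall x y, 0 <= x -> x <= y -> y <= 1 -> (w y <= w x)%E),
      (forall x y, 0 <= x -> y <= 1 -> (vlow w <= x%:E)%E -> (y%:E <= vhigh w)%E ->
          x < y -> (w y < w x)%E),
      {within [set x | 0 <= x <= 1 /\ (vlow w < x%:E)%E /\ (x%:E <= vhigh w)%E],
         continuous w} &
      (forall x, 0 <= x <= 1 -> (vlow w <= x%:E)%E -> (x%:E < vhigh w)%E ->
          right_differentiable_at w x)].

Definition winv (w : R -> \bar R) (t : R) : R :=
  let S := [set u | 0 <= u <= 1 /\ (w u <= t%:E)%E] in
  if `[< S = set0 >] then 1 else inf S.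

End Market.

From mathcomp Require Import all_boot all_order all_algebra.
From mathcomp Require Import all_classical all_reals all_analysis.
From mathcomp Require Import ring.
Import Order.TTheory GRing.Theory Num.Theory.
Import numFieldNormedType.Exports.
Local Open Scope classical_set_scope.
Local Open Scope ring_scope.

(* A competitor of type (u, a) playing
   sigma_w(u, a) = max (w u) a has not bought before tau iff tau < w u or
   tau < a.  Since w is non-increasing, {u | tau < w u} is an initial segment
   of [0, 1] of length w^-1(tau), so a single competitor stays out with
   probability q = w^-1(tau) + (1 - w^-1(tau)) (1 - tau / T)
   = 1 - tau / T * (1 - w^-1(tau)).  Competitors are i.i.d., so the buyer
   outlasts n of them with probability q^n, and averaging over the Poisson
   (lam T) law of their number gives exp (- lam T (1 - q)), which is
   exp (- lam tau (1 - w^-1(tau))).  The buyer's own arrival time does not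
   enter the utility at all. *)

Section restrict_cst.
Context d (X : measurableType d) (R : realType) (mu : {measure set X -> \bar R}).

Lemma Rintegral_restrict_cst {D P : set X} {r : R} :
  measurable P -> P `<=` D -> mu P = r%:E ->
  forall c, \int[mu]_(x in D) (cst c \_ P) x = c * r.
Proof.
by move=> mP PD muP c; rewrite -Rintegral_mkcondr (setIidr PD) Rintegral_cst // muP.
Qed.

Lemma integrable_restrict_cst {D P : set X} {r : R} : measurable D ->
  measurable P -> P `<=` D -> mu P = r%:E ->
  forall c, mu.-integrable D (EFin \o cst c \_ P).
Proof.
move=> mD mP PD muP c; rewrite -restrict_EFin; apply/integrable_restrict => //.
rewrite setIidr //; apply: measurable_bounded_integrable => //.
  by rewrite muP ltry.
exact: bounded_cst.
Qed.

End restrict_cst.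
Arguments Rintegral_restrict_cst {d X R mu D P r}.
Arguments integrable_restrict_cst {d X R mu D P r}.

Section market.
Context {R : realType}.
Notation mu := (@lebesgue_measure R).

Lemma lebesgue_measure_bnd_itv (a b : R) (ba bb : bool) : a <= b ->
  mu [set` Interval (BSide ba a) (BSide bb b)] = (b - a)%:E.
Proof.
move=> ab; rewrite lebesgue_measure_itv /=.
case: ifPn => // ab'; suff -> : b = a by rewrite subrr.
by apply/eqP; rewrite eq_le ab leNgt ab'.
Qed.

Definition waits_past (sigma : R -> R -> \bar R) (tau : R) (x : R * R) : R :=
  if (tau%:E < sigma x.1 x.2)%E then 1 else 0.

Lemma lt_min_sigma_prod (sigma : R -> R -> \bar R) (tau : R) (s : seq (R * R)) :
  (if (tau%:E < min_sigma sigma s)%E then 1 else 0) =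
  \prod_(x <- s) waits_past sigma tau x.
Proof.
elim: s => [|x s IHs]; first by rewrite /min_sigma !big_nil ltry.
rewrite big_cons -IHs /min_sigma big_cons lt_min /waits_past.
by case: (_ < _)%E; case: (_ < _)%E; rewrite ?mulr1 ?mulr0.
Qed.

Lemma iid_expect_prod (T : R) (f : R * R -> R) :
  (forall u, mu.-integrable `[0, T]%classic (EFin \o (fun a => f (u, a)))) ->
  mu.-integrable `[0, 1]%classic
    (EFin \o (fun u => T^-1 * \int[mu]_(a in `[0, T]%classic) f (u, a))) ->
  forall n K, iid_expect T n (fun s => K * \prod_(x <- s) f x) =
    K * (\int[mu]_(u in `[0, 1]%classic)
           (T^-1 * \int[mu]_(a in `[0, T]%classic) f (u, a))) ^+ n.
Proof.
move=> f_int_a f_int_u; set q := \int[mu]_(u in `[0, 1]%classic) _.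
elim=> [|n IHn] K /=; first by rewrite big_nil expr0.
have expect_cons u a :
    iid_expect T n (fun s => K * \prod_(x <- (u, a) :: s) f x) = K * q ^+ n * f (u, a).
  rewrite mulrAC -IHn; congr iid_expect; apply/funext => s.
  by rewrite big_cons mulrA.
under eq_Rintegral do under eq_Rintegral do rewrite expect_cons.
under eq_Rintegral do rewrite RintegralZl // mulrCA.
by rewrite RintegralZl // -/q exprSr mulrA.
Qed.

Lemma poisson_series_pow (m K q : R) :
  limn (series (fun n => expR (- m) * m ^+ n / n`!%:R * (K * q ^+ n)))
  = K * expR (- m * (1 - q)).
Proof.
have -> : (fun n => expR (- m) * m ^+ n / n`!%:R * (K * q ^+ n))
    = (K * expR (- m)) *: exp_coeff (m * q).
  by apply/funext => n; rewrite /exp_coeff /= !fctE exprMn /GRing.scale /=; ring.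
rewrite lim_seriesZ; last exact: is_cvg_series_exp_coeff.
rewrite -/(expR _) /GRing.scale /= -mulrA -expRD.
by congr (_ * expR _); ring.
Qed.

Section threshold.
Variable w : R -> \bar R.
Hypothesis w_nonincr : forall x y, 0 <= x -> x <= y -> y <= 1 -> (w y <= w x)%E.

Lemma winvP (tau : R) :
  [/\ 0 <= winv w tau <= 1,
      forall u, 0 <= u <= 1 -> u < winv w tau -> (tau%:E < w u)%E &
      forall u, 0 <= u <= 1 -> winv w tau < u -> (w u <= tau%:E)%E].
Proof.
rewrite /winv; set S := [set u | 0 <= u <= 1 /\ (w u <= tau%:E)%E].
case: (asboolP (S = set0)) => [S0|/eqP/set0P[s Ss]].
  split; first by rewrite ler01 lexx.
  - move=> u u01 _; rewrite ltNge; apply/negP => wu.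
    by move: (conj u01 wu : S u); rewrite S0.
  - by move=> u /andP[_ u1]; rewrite ltNge u1.
have S_lb : has_lbound S by exists 0 => x [/andP[]].
split.
- rewrite lb_le_inf /=; [|by exists s|by move=> x [/andP[]]].
  by apply: le_trans (ge_inf S_lb Ss) _; case: Ss => /andP[].
- move=> u u01 u_lt; rewrite ltNge; apply/negP => wu.
  by move: (ge_inf S_lb (conj u01 wu)); rewrite leNgt u_lt.
- move=> u /andP[u0 u1] /(inf_lt (ex_intro _ s Ss))[y [/andP[y0 y1] wy] yu].
  by apply: le_trans wy; apply: w_nonincr => //; exact: ltW.
Qed.

Lemma winv_superlevel_set (tau : R) : exists b : bool,
  [set u | 0 <= u <= 1 /\ (tau%:E < w u)%E] =
  [set` Interval (BLeft 0) (BSide b (winv w tau))].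
Proof.
have [/andP[m0 m1] w_gt w_le] := winvP tau; set m := winv w tau in m0 m1 w_gt w_le *.
have lt_w u : 0 <= u <= 1 -> (tau%:E < w u)%E -> u <= m.
  by move=> u01 tw; rewrite leNgt; apply/negP => /(w_le _ u01); rewrite leNgt tw.
case: (boolP (tau%:E < w m)%E) => wm; [exists false | exists true];
  apply/seteqP; split => u /=; rewrite in_itv /=.
- by move=> [/andP[u0 u1] tw]; rewrite u0 lt_w ?u0.
- move=> /andP[u0]; rewrite le_eqVlt => /predU1P[->|um]; first by rewrite m0.
  have u01 : 0 <= u <= 1 by rewrite u0 (le_trans (ltW um)).
  by split; [|apply: w_gt].
- move=> [/andP[u0 u1] tw]; rewrite u0 lt_neqAle lt_w ?u0 // andbT.
  by apply: contraNneq wm => <-.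
- move=> /andP[u0 um]; have u01 : 0 <= u <= 1 by rewrite u0 (le_trans (ltW um)).
  by split; [|apply: w_gt].
Qed.

Lemma waits_past_thr_integral_arrival (T tau u : R) : 0 <= tau <= T ->
  mu.-integrable `[0, T]%classic
    (EFin \o (fun a => waits_past (sigma_thr w) tau (u, a))) /\
  \int[mu]_(a in `[0, T]%classic) waits_past (sigma_thr w) tau (u, a) =
    (if (tau%:E < w u)%E then T else T - tau).
Proof.
move=> /andP[tau0 tauT].
pose b := (tau%:E < w u)%E; pose x := if b then 0 else tau.
have T0 : 0 <= T := le_trans tau0 tauT.
have [x0 xT] : 0 <= x /\ x <= T by rewrite /x; case: ifP.
pose P := [set` Interval (BSide b x) (BRight T)].
have mP : measurable P by exact: measurable_itv.
have PT : P `<=` `[0, T] by apply: subset_itvr; rewrite bnd_simp.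
have muP : mu P = (T - x)%:E by rewrite lebesgue_measure_bnd_itv.
have waitsE : {in `[0, T]%classic, cst (1 : R) \_ P =1
    (fun a => waits_past (sigma_thr w) tau (u, a))}.
  move=> a; rewrite mem_setE in_itv /= => /andP[a0 aT].
  rewrite patchE mem_setE in_itv /= aT andbT /waits_past /sigma_thr /= lt_max lte_fin.
  by rewrite /x /b; case: (_ < _)%E; rewrite /= ?a0.
split.
  apply: (eq_integrable (mu := mu) _ (EFin \o cst (1 : R) \_ P)) => //.
    by move=> a /waitsE /= ->.
  exact: (integrable_restrict_cst (mu := mu) _ mP PT muP).
rewrite (@eq_Rintegral _ _ _ mu _ (cst (1 : R) \_ P)); last first.
  by move=> a aT; rewrite waitsE.
rewrite (Rintegral_restrict_cst (mu := mu) mP PT muP) mul1r /x /b.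
by case: (_ < _)%E; rewrite ?subr0.
Qed.

Lemma waits_past_thr_integral (T tau : R) : 0 < T -> 0 <= tau <= T ->
  mu.-integrable `[0, 1]%classic (EFin \o (fun u =>
    T^-1 * \int[mu]_(a in `[0, T]%classic) waits_past (sigma_thr w) tau (u, a))) /\
  \int[mu]_(u in `[0, 1]%classic)
    (T^-1 * \int[mu]_(a in `[0, T]%classic) waits_past (sigma_thr w) tau (u, a))
  = 1 - tau / T * (1 - winv w tau).
Proof.
move=> T_gt0 tau0T.
have [/andP[m0 _] _ _] := winvP tau.
have [b level_setE] := winv_superlevel_set tau.
pose P := [set` Interval (BLeft 0) (BSide b (winv w tau))].
have mP : measurable P by exact: measurable_itv.
have memP u : u \in `[0, 1]%classic -> (u \in P) = (tau%:E < w u)%E.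
  rewrite mem_setE in_itv /= => u01; rewrite /P -level_setE.
  by apply/idP/idP => [/[!inE][[_ ->]] | tw] //; rewrite inE.
have P01 : P `<=` `[0, 1].
  by rewrite /P -level_setE => u [u01 _]; rewrite /= in_itv.
have muP : mu P = (winv w tau)%:E by rewrite lebesgue_measure_bnd_itv ?subr0.
have mu01 : mu `[0, 1]%classic = 1%:E by rewrite lebesgue_measure_bnd_itv ?subr0.
pose g u := (cst (1 - tau / T) \_ `[0, 1]%classic) u + (cst (tau / T) \_ P) u.
have gE : {in `[0, 1]%classic, g =1 fun u =>
    T^-1 * \int[mu]_(a in `[0, T]%classic) waits_past (sigma_thr w) tau (u, a)}.
  move=> u u01; rewrite (waits_past_thr_integral_arrival _ _ u tau0T).2.
  rewrite /g !patchE u01 memP //.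
  by case: ifP => _ /=; rewrite -?[point]/(0 : R); field; rewrite gt_eqF.
have m01 : measurable (`[0, 1]%classic : set R) by exact: measurable_itv.
have int01 :=
  integrable_restrict_cst (mu := mu) m01 m01 (@subset_refl _ _) mu01 (1 - tau / T).
have intP := integrable_restrict_cst (mu := mu) m01 mP P01 muP (tau / T).
split.
  apply: (eq_integrable _ _ _ _ (integrableD _ int01 intP)) => //.
  by move=> u /gE /= <-; rewrite EFinD.
rewrite (@eq_Rintegral _ _ _ mu _ g); last by move=> u u01; rewrite gE.
rewrite RintegralD // (Rintegral_restrict_cst (mu := mu) m01 (@subset_refl _ _) mu01).
by rewrite (Rintegral_restrict_cst (mu := mu) mP P01 muP); field; rewrite gt_eqF.
Qed.

End threshold.

End market.

Theorem proposition2 (R : realType) (T lam : R) (p : R -> R) (w : R -> \bar R) :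
  0 < T -> 0 < lam ->
  {within `[0, T]%classic, continuous p} ->
  (forall x y, 0 <= x -> x <= y -> y <= T -> p y <= p x) ->
  (forall x, 0 <= x <= T -> 0 <= p x) ->
  (forall u, 0 <= u <= 1 -> (0 <= w u)%E /\ ((w u <= T%:E)%E \/ w u = +oo%E)) ->
  regular w ->
  forall v alpha tau : R, 0 <= v <= 1 -> 0 <= alpha <= T -> alpha <= tau <= T ->
    interim_utility T lam (sigma_thr w) p tau v alpha
      = interim_utility T lam (sigma_thr w) p tau v 0 /\
    interim_utility T lam (sigma_thr w) p tau v 0
      = (v - p tau) * expR (- lam * tau * (1 - winv w tau)).
Proof.
move=> T_gt0 _ _ _ _ _ [w_nonincr _ _ _] v alpha tau _.
move=> /andP[alpha0 _] /andP[alpha_tau tauT].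
split; first by [].
have tau0T : 0 <= tau <= T by rewrite tauT (le_trans alpha0 alpha_tau).
have [prob_int prob] := waits_past_thr_integral _ w_nonincr _ _ T_gt0 tau0T.
have arrival_int u := (waits_past_thr_integral_arrival w _ _ u tau0T).1.
have expectE n : iid_expect T n (fun s =>
      (v - p tau) * (if (tau%:E < min_sigma (sigma_thr w) s)%E then 1 else 0))
    = (v - p tau) * (1 - tau / T * (1 - winv w tau)) ^+ n.
  rewrite -prob -iid_expect_prod //; congr iid_expect; apply/funext => s.
  by rewrite lt_min_sigma_prod.
rewrite /interim_utility; under eq_fun do rewrite expectE.
rewrite poisson_series_pow; congr (_ * expR _).
by field; rewrite gt_eqF.
Qed.
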